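(* Let $S$ be a Hausdorff pseudocompact semitopological semigroup which is an orthogonal sum $S=\sum_{i\in\mathscr I}B^0_{\lambda_i}(S_i)$ of topological Brandt $\lambda_i^0$-extensions of semitopological monoids $S_i$ with zeros. Then (i) for every $i\in\mathscr I$ the subspace $B^0_{\lambda_i}(S_i)$ is pseudocompact; (ii) for all $i\in\mathscr I$ and $\alpha_i,\beta_i\in\lambda_i$ the subspace $(S_i)_{\alpha_i,\beta_i}$ is pseudocompact.
   Context: All spaces are Hausdorff; a semitopological semigroup is a Hausdorff space with separately continuous associative operation; a space is pseudocompact if every locally finite family of non-empty open sets is finite. For a semigroup $T$ with zero $0_T$ and a cardinal $\lambda\ge1$, $B^0_\lambda(T)=(\lambda\times (T\setminus\{0_T\})\times\lambda)\cup\{0\}$ with $(\alpha,a,\beta)(\gamma,b,\delta)=(\alpha,ab,\delta)$ if $\beta=\gamma$ and $ab\ne0_T$, and $0$ otherwise, $0$ a zero. For $A\subseteq T$, $A_{\alpha,\beta}=\{(\alpha,s,\beta):s\in A\setminus\{0_T\}\}\cup\{0\}$ if $0_T\in A$ and $\{(\alpha,s,\beta):s\in A\}$ otherwise. A topological Brandt $\lambda^0$-extension of a semitopological monoid $T$ with zero is $B^0_\lambda(T)$ with a topology making it a semitopological semigroup such that for some $\alpha\in\lambda$ the map $s\mapsto(\alpha,s,\alpha)$ ($0_T\mapsto0$) is a homeomorphism $T\to T_{\alpha,\alpha}$. The orthogonal sum of semigroups $T_\iota$ with zeros is $\{0\}\cup\bigcup_\iota(T_\iota\setminus\{0_\iota\})$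 with products computed in $T_\iota$ when both factors lie in the same $T_\iota$ and the product is non-zero, and $0$ otherwise. *)

From Stdlib Require Import List.

Set Implicit Arguments.

Record topology (X : Type) := Topology {
  is_open : (X -> Prop) -> Prop;
  open_full : is_open (fun _ => True);
  open_inter : forall U V, is_open U -> is_open V ->
                 is_open (fun x => U x /\ V x);
  open_union : forall F : (X -> Prop) -> Prop,
                 (forall U, F U -> is_open U) ->
                 is_open (fun x => exists U, F U /\ U x)
}.

Definition hausdorff (X : Type) (tX : topology X) : Prop :=
  forall x y : X, x <> y ->
    exists U V, is_open tX U /\ is_open tX V /\ U x /\ V y /\
      (forall z, ~ (U z /\ V z)).

Definition continuous (X Y : Type) (tX : topology X) (tY : topology Y)
  (f : X -> Y) : Prop :=
  forall V, is_open tY V -> is_open tX (fun x => V (f x)).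

Definition finite_type (J : Type) : Prop :=
  exists l : list J, forall j, In j l.

(** Open subsets of A are the traces [A ∩ U]. *)
Definition pseudocompact_subspace (X : Type) (tX : topology X)
  (A : X -> Prop) : Prop :=
  forall (J : Type) (F : J -> X -> Prop),
    (forall j, exists U, is_open tX U /\
                 (forall x, F j x <-> (A x /\ U x))) ->
    (forall j, exists x, F j x) ->
    (forall a, A a -> exists V, is_open tX V /\ V a /\
        exists l : list J, forall j,
          (exists y, A y /\ V y /\ F j y) -> In j l) ->
    finite_type J.

Definition pseudocompact (X : Type) (tX : topology X) : Prop :=
  pseudocompact_subspace tX (fun _ => True).

Definition semitopological_semigroup (X : Type) (tX : topology X)
  (mul : X -> X -> X) : Prop :=
  hausdorff tX /\
  (forall x y z, mul x (mul y z) = mul (mul x y) z) /\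
  (forall a, continuous tX tX (mul a)) /\
  (forall a, continuous tX tX (fun x => mul x a)).

Definition semitopological_monoid_with_zero (T : Type) (tT : topology T)
  (mul : T -> T -> T) (one zero : T) : Prop :=
  semitopological_semigroup tT mul /\
  (forall s, mul one s = s) /\ (forall s, mul s one = s) /\
  (forall s, mul zero s = zero) /\ (forall s, mul s zero = zero).

Definition homeomorphism_onto_image (T X : Type) (tT : topology T)
  (tX : topology X) (f : T -> X) : Prop :=
  continuous tT tX f /\
  (forall s t, f s = f t -> s = t) /\
  (forall U, is_open tT U ->
     exists W, is_open tX W /\ forall s, U s <-> W (f s)).

(** [X] (with zero [zero] and multiplication [mul]) is identified with the
    orthogonal sum  Σ_{i∈I} B^0_{L i}(T i)  through the maps
    [emb i a s b] = (a,s,b) ∈ B^0_{L i}(T i) for s ≠ 0_{T i}, and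
    [emb i a 0 b] = 0.  The data below says exactly that [emb] is a
    bijection from the disjoint union of the sets (L i × (T i ∖ {0}) × L i)
    onto X ∖ {0}, and that [mul] is the orthogonal-sum Brandt product. *)
Definition is_orthogonal_sum_Brandt (I : Type) (L T : I -> Type)
  (tmul : forall i, T i -> T i -> T i) (tzero : forall i, T i)
  (X : Type) (mul : X -> X -> X) (zero : X)
  (emb : forall i, L i -> T i -> L i -> X) : Prop :=
  (forall i, inhabited (L i)) /\
  (forall i a b, emb i a (tzero i) b = zero) /\
  (forall i a s b, s <> tzero i -> emb i a s b <> zero) /\
  (forall i a s b j c t d, s <> tzero i -> t <> tzero j ->
     emb i a s b = emb j c t d ->
     existT (fun k => (L k * T k * L k)%type) i (a, s, b) =
     existT (fun k => (L k * T k * L k)%type) j (c, t, d)) /\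
  (forall x, x = zero \/ exists i a s b, s <> tzero i /\ x = emb i a s b) /\
  (forall x, mul zero x = zero) /\ (forall x, mul x zero = zero) /\
  (forall i a s b c t d, b = c ->
     mul (emb i a s b) (emb i c t d) = emb i a (tmul i s t) d) /\
  (forall i a s b c t d, b <> c ->
     mul (emb i a s b) (emb i c t d) = zero) /\
  (forall i j a s b c t d, i <> j ->
     mul (emb i a s b) (emb j c t d) = zero).

Definition Brandt_summand (I : Type) (L T : I -> Type) (X : Type) (zero : X)
  (emb : forall i, L i -> T i -> L i -> X) (i : I) : X -> Prop :=
  fun x => x = zero \/ exists a s b, x = emb i a s b.

(** The subset (T i)_{α,β} = {(α,s,β) : s ∈ T i ∖ {0}} ∪ {0}. *)
Definition Brandt_cell (I : Type) (L T : I -> Type) (X : Type)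
  (emb : forall i, L i -> T i -> L i -> X) (i : I) (a b : L i) : X -> Prop :=
  fun x => exists s, x = emb i a s b.

Arguments is_orthogonal_sum_Brandt [I] L T tmul tzero [X] mul zero emb.
Arguments Brandt_summand [I L T X] zero emb i _.
Arguments Brandt_cell [I L T X] emb i a b _.

(* In each case A is the image of a continuous map
   S -> A that fixes A (a retraction), and a continuous image of a
   pseudocompact space is pseudocompact.

   (ii) For the cell (S_i)_{α,β} the retraction is the "corner" map
        y ↦ (α,1,α)·y·(β,1,β), which is continuous because multiplication is
        separately continuous.
   (i)  For the summand B = B^0_{λ_i}(S_i) the retraction is the identity on
        B and sends everything else to 0.  It is continuous because both
        B ∖ {0} (the union of the corner-preimages of S ∖ {0}) and S ∖ B (the
        union of the punctured summands j ≠ i) are open. *)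
From Stdlib Require Import List.
From Stdlib Require Import Classical ClassicalEpsilon FunctionalExtensionality
  PropExtensionality.

Lemma open_ext (X : Type) (tX : topology X) (U V : X -> Prop) :
  is_open tX U -> (forall x, U x <-> V x) -> is_open tX V.
Proof.
  intros HU HUV.
  replace V with U; [exact HU |].
  apply functional_extensionality; intro x.
  apply propositional_extensionality; apply HUV.
Qed.

Lemma open_indexed_union (X K : Type) (tX : topology X) (P : K -> X -> Prop) :
  (forall k, is_open tX (P k)) -> is_open tX (fun x => exists k, P k x).
Proof.
  intros HP.
  apply open_ext with (U := fun x => exists U, (exists k, U = P k) /\ U x).
  - apply open_union. intros U [k ->]. apply HP.
  - intro x; split.
    + intros [U [[k ->] Hx]]. exists k; exact Hx.
    + intros [k Hk]. exists (P k); eauto.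
Qed.

Lemma open_binary_union (X : Type) (tX : topology X) (U V : X -> Prop) :
  is_open tX U -> is_open tX V -> is_open tX (fun x => U x \/ V x).
Proof.
  intros HU HV.
  apply open_ext with (U := fun x => exists b : bool, (if b then U else V) x).
  - apply open_indexed_union. intros [|]; assumption.
  - intro x; split.
    + intros [[|] H]; auto.
    + intros [H | H]; [exists true | exists false]; exact H.
Qed.

Lemma hausdorff_point_closed (X : Type) (tX : topology X) (z : X) :
  hausdorff tX -> is_open tX (fun y => y <> z).
Proof.
  intros Hhaus.
  apply open_ext with
    (U := fun y => exists V, (is_open tX V /\ forall w, V w -> w <> z) /\ V y).
  - apply open_union. tauto.
  - intro y; split.
    + intros [V [[_ HV] Vy]]. exact (HV y Vy).
    + intro Hyz.
      destruct (Hhaus y z Hyz) as [U [V [HU [HV [Uy [Vz Hdisj]]]]]].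
      exists U; repeat split; auto.
      intros w Uw ->. exact (Hdisj z (conj Uw Vz)).
Qed.

(* A continuous map from a pseudocompact space onto a subspace A makes A
   pseudocompact: pull a locally finite family on A back to the whole space. *)
Lemma pseudocompact_continuous_image (X : Type) (tX : topology X)
  (A : X -> Prop) (f : X -> X) :
  pseudocompact tX -> continuous tX tX f ->
  (forall x, A (f x)) -> (forall a, A a -> exists x, f x = a) ->
  pseudocompact_subspace tX A.
Proof.
  intros Hpc Hf Hinto Honto J F Hopen Hnonempty Hlocfin.
  apply (Hpc J (fun j x => F j (f x))).
  - intro j. destruct (Hopen j) as [U [HU HF]].
    exists (fun x => U (f x)); split; [exact (Hf U HU) |].
    intro x; rewrite HF; intuition.
  - intro j. destruct (Hnonempty j) as [y Hy].
    destruct (Hopen j) as [U [_ HF]].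
    destruct (Honto y (proj1 (proj1 (HF y) Hy))) as [x <-].
    exists x; exact Hy.
  - intros a _.
    destruct (Hlocfin (f a) (Hinto a)) as [V [HV [Va [l Hl]]]].
    exists (fun x => V (f x)); split; [exact (Hf V HV) |]; split; [exact Va |].
    exists l. intros j [y [_ [Vy Fy]]]. apply Hl. exists (f y); auto.
Qed.

Lemma collapse_continuous (X : Type) (tX : topology X) (A : X -> Prop) (z : X)
  (HA : forall y, {A y} + {~ A y}) :
  is_open tX (fun y => y <> z /\ A y) -> is_open tX (fun y => ~ A y) ->
  continuous tX tX (fun y => if HA y then y else z).
Proof.
  intros Hpunct Hcompl U HU.
  destruct (classic (U z)) as [Uz | Uz].
  - apply open_ext with (U := fun y => U y \/ ~ A y).
    + apply open_binary_union; assumption.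
    + intro y; destruct (HA y) as [Ay | nAy]; split; tauto.
  - apply open_ext with (U := fun y => U y /\ (y <> z /\ A y)).
    + apply open_inter; assumption.
    + intro y; destruct (HA y) as [Ay | nAy]; split.
      * tauto.
      * intro Uy; repeat split; auto. intros ->; contradiction.
      * tauto.
      * intro; contradiction.
Qed.

Lemma pseudocompact_clopen_up_to_point (X : Type) (tX : topology X)
  (A : X -> Prop) (z : X) :
  pseudocompact tX -> A z ->
  is_open tX (fun y => y <> z /\ A y) -> is_open tX (fun y => ~ A y) ->
  pseudocompact_subspace tX A.
Proof.
  intros Hpc Az Hpunct Hcompl.
  pose (HA := fun y => excluded_middle_informative (A y)).
  apply pseudocompact_continuous_image
    with (f := fun y => if HA y then y else z).
  - exact Hpc.
  - apply collapse_continuous; assumption.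
  - intro x; destruct (HA x); assumption.
  - intros a Aa. exists a. destruct (HA a); [reflexivity | contradiction].
Qed.

Section OrthogonalSum.

Variables (I : Type) (L T : I -> Type).
Variables (tmul : forall i, T i -> T i -> T i) (tone tzero : forall i, T i).
Variables (X : Type) (tX : topology X) (mul : X -> X -> X) (zero : X).
Variable emb : forall i, L i -> T i -> L i -> X.

Hypothesis mul_cont_left : forall a, continuous tX tX (mul a).
Hypothesis mul_cont_right : forall a, continuous tX tX (fun x => mul x a).
Hypothesis tone_left : forall i s, tmul i (tone i) s = s.
Hypothesis tone_right : forall i s, tmul i s (tone i) = s.
Hypothesis orth_sum : is_orthogonal_sum_Brandt L T tmul tzero mul zero emb.

(* The corner map y ↦ (α,1,α) y (β,1,β), a retraction of S onto (S_i)_{α,β}. *)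
Definition corner (i : I) (a b : L i) (y : X) : X :=
  mul (mul (emb i a (tone i) a) y) (emb i b (tone i) b).

Lemma corner_continuous (i : I) (a b : L i) : continuous tX tX (corner i a b).
Proof.
  intros U HU. unfold corner.
  apply (mul_cont_left (emb i a (tone i) a)
           (fun x => U (mul x (emb i b (tone i) b)))).
  exact (mul_cont_right _ U HU).
Qed.

Lemma corner_zero (i : I) (a b : L i) : corner i a b zero = zero.
Proof.
  destruct orth_sum as [_ [_ [_ [_ [_ [Hm0l [Hm0r _]]]]]]].
  unfold corner. rewrite Hm0r, Hm0l. reflexivity.
Qed.

Lemma corner_fixes_cell (i : I) (a b : L i) (s : T i) :
  corner i a b (emb i a s b) = emb i a s b.
Proof.
  destruct orth_sum as [_ [_ [_ [_ [_ [_ [_ [Hsame _]]]]]]]].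
  unfold corner.
  rewrite Hsame by reflexivity. rewrite Hsame by reflexivity.
  rewrite tone_left, tone_right. reflexivity.
Qed.

Lemma corner_cases (i : I) (a b : L i) (y : X) :
  corner i a b y = zero \/ exists s, y = emb i a s b.
Proof.
  destruct orth_sum as
    [_ [_ [_ [_ [Hsurj [Hm0l [_ [Hsame [Hdiff Hother]]]]]]]]].
  destruct (Hsurj y) as [-> | [j [c [s [d [_ ->]]]]]].
  - left; apply corner_zero.
  - destruct (classic (j = i)) as [<- | Hji].
    + destruct (classic (c = a)) as [<- | Hca].
      * destruct (classic (d = b)) as [<- | Hdb]; [right; exists s; reflexivity |].
        left. unfold corner. rewrite Hsame by reflexivity. apply Hdiff; exact Hdb.
      * left. unfold corner. rewrite Hdiff by (intro E; apply Hca; symmetry; exact E).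
        apply Hm0l.
    + left. unfold corner. rewrite Hother by (intro E; apply Hji; symmetry; exact E).
      apply Hm0l.
Qed.

Lemma corner_into_cell (i : I) (a b : L i) (y : X) :
  Brandt_cell emb i a b (corner i a b y).
Proof.
  destruct orth_sum as [_ [Hz0 _]].
  destruct (corner_cases i a b y) as [E | [s ->]].
  - exists (tzero i). rewrite E, Hz0. reflexivity.
  - exists s. apply corner_fixes_cell.
Qed.

Lemma cell_pseudocompact (i : I) (a b : L i) :
  pseudocompact tX -> pseudocompact_subspace tX (Brandt_cell emb i a b).
Proof.
  intros Hpc.
  apply pseudocompact_continuous_image with (f := corner i a b).
  - exact Hpc.
  - apply corner_continuous.
  - apply corner_into_cell.
  - intros y [s ->]. exists (emb i a s b). apply corner_fixes_cell.
Qed.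

Lemma punctured_summand_corners (i : I) (y : X) :
  y <> zero /\ Brandt_summand zero emb i y <->
  exists a b, corner i a b y <> zero.
Proof.
  split.
  - intros [Hy [Hz | [a [s [b ->]]]]]; [contradiction |].
    exists a, b. rewrite corner_fixes_cell. exact Hy.
  - intros [a [b Hc]].
    destruct (corner_cases i a b y) as [E | [s Hys]]; [contradiction |].
    split.
    + intros ->. apply Hc. apply corner_zero.
    + right. exists a, s, b. exact Hys.
Qed.

Hypothesis zero_closed : is_open tX (fun y => y <> zero).

Lemma punctured_summand_open (i : I) :
  is_open tX (fun y => y <> zero /\ Brandt_summand zero emb i y).
Proof.
  apply open_ext with (U := fun y => exists a b, corner i a b y <> zero).
  - apply open_indexed_union; intro a.
    apply open_indexed_union; intro b.
    exact (corner_continuous i a b _ zero_closed).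
  - intro y. symmetry. apply punctured_summand_corners.
Qed.

(* The summands are disjoint outside zero and cover S. *)
Lemma outside_summand (i : I) (y : X) :
  ~ Brandt_summand zero emb i y <->
  exists j : {j : I | j <> i}, y <> zero /\ Brandt_summand zero emb (proj1_sig j) y.
Proof.
  destruct orth_sum as [_ [Hz0 [_ [Hinj [Hsurj _]]]]].
  split.
  - intro Hy. destruct (Hsurj y) as [-> | [j [c [s [d [_ ->]]]]]].
    + exfalso; apply Hy; left; reflexivity.
    + assert (Hji : j <> i) by (intros ->; apply Hy; right; eauto).
      exists (exist _ j Hji). split.
      * intro E. apply Hy. left. exact E.
      * right. eauto.
  - intros [[j Hji] [Hy [E | [c [s [d Hyj]]]]]]; [contradiction |].
    intros [E | [a [t [b Hyi]]]]; [contradiction |].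
    assert (Hs : s <> tzero j) by (intros ->; apply Hy; rewrite Hyj; apply Hz0).
    assert (Ht : t <> tzero i) by (intros ->; apply Hy; rewrite Hyi; apply Hz0).
    rewrite Hyj in Hyi.
    apply Hji. exact (f_equal (@projT1 _ _) (Hinj _ _ _ _ _ _ _ _ Hs Ht Hyi)).
Qed.

Lemma summand_complement_open (i : I) :
  is_open tX (fun y => ~ Brandt_summand zero emb i y).
Proof.
  apply open_ext with (U := fun y => exists j : {j : I | j <> i},
                         y <> zero /\ Brandt_summand zero emb (proj1_sig j) y).
  - apply open_indexed_union. intro j. apply punctured_summand_open.
  - intro y. symmetry. apply outside_summand.
Qed.

Lemma summand_pseudocompact (i : I) :
  pseudocompact tX -> pseudocompact_subspace tX (Brandt_summand zero emb i).
Proof.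
  intros Hpc.
  apply pseudocompact_clopen_up_to_point with (z := zero).
  - exact Hpc.
  - left; reflexivity.
  - apply punctured_summand_open.
  - apply summand_complement_open.
Qed.

End OrthogonalSum.

Theorem proposition2p6
  (I : Type) (L T : I -> Type)
  (tT : forall i, topology (T i))
  (tmul : forall i, T i -> T i -> T i) (tone tzero : forall i, T i)
  (X : Type) (tX : topology X) (mul : X -> X -> X) (zero : X)
  (emb : forall i, L i -> T i -> L i -> X) :
  (* S is a Hausdorff pseudocompact semitopological semigroup *)
  semitopological_semigroup tX mul ->
  pseudocompact tX ->
  (* S is the orthogonal sum of the B^0_{λ_i}(S_i) *)
  is_orthogonal_sum_Brandt L T tmul tzero mul zero emb ->
  (* each S_i is a semitopological monoid with zero *)
  (forall i, semitopological_monoid_with_zero (tT i) (tmul i) (tone i) (tzero i)) ->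
  (* each B^0_{λ_i}(S_i) (with the subspace topology) is a topological
     Brandt λ_i^0-extension of S_i: for some α the map s ↦ (α,s,α)
     is a homeomorphism of S_i onto (S_i)_{α,α} *)
  (forall i, exists a : L i,
     homeomorphism_onto_image (tT i) tX (fun s => emb i a s a)) ->
  (forall i, pseudocompact_subspace tX (Brandt_summand zero emb i)) /\
  (forall i (a b : L i), pseudocompact_subspace tX (Brandt_cell emb i a b)).
Proof.
  intros [Hhaus [_ [Hleft Hright]]] Hpc Horth Hmon _.
  assert (Hone_l : forall i s, tmul i (tone i) s = s)
    by (intros i; apply (Hmon i)).
  assert (Hone_r : forall i s, tmul i s (tone i) = s)
    by (intros i; apply (Hmon i)).
  pose proof (hausdorff_point_closed _ tX zero Hhaus) as Hzero_closed.
  split.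
  - intro i. eapply summand_pseudocompact; eassumption.
  - intros i a b. eapply cell_pseudocompact; eassumption.
Qed.
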